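(* Let $(p_i)_{i\geq1}$ enumerate the odd primes and let $\Lambda_1=(1,1)\mathbb{Z}+(0,2)\mathbb{Z}$, $\Lambda_2=\mathbb{Z}\times2\mathbb{Z}$, $\Lambda_{2i+1}=(2p_i,1)\mathbb{Z}+(0,2)\mathbb{Z}$ and $\Lambda_{2i+2}=(2^{i+1},1)\mathbb{Z}+(0,2)\mathbb{Z}$ for $i\geq1$. Let $\mathcal{M}_\mathscr{B}=\bigcup_{i\geq1}\Lambda_i$, $\mathcal{F}_\mathscr{B}=\mathbb{Z}^2\setminus\mathcal{M}_\mathscr{B}$, $\eta=\mathbb{1}_{\mathcal{F}_\mathscr{B}}$ and $X_\eta$ its orbit closure under the $\mathbb{Z}^2$-shift. Then $\mathcal{F}_\mathscr{B}=\{-2,0,2\}\times(2\mathbb{Z}+1)$, the system $(X_\eta,(S_{\mathbf{n}})_{\mathbf{n}\in\mathbb{Z}^2})$ is proximal, and there is no infinite pairwise coprime family $\{\widetilde\Lambda_j\}_{j\geq1}$ of proper lattices in $\mathbb{Z}^2$ with $\bigcup_{j\geq1}\widetilde\Lambda_j\subseteq\mathcal{M}_\mathscr{B}$.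
   Context: A lattice in $\mathbb{Z}^2$ is a subgroup of finite index; proper lattices $\Lambda,\Lambda'$ are coprime if $\Lambda+\Lambda'=\mathbb{Z}^2$. Shift: $(S_{\mathbf{n}}x)_{\mathbf{g}}=x_{\mathbf{g}+\mathbf{n}}$ on $\{0,1\}^{\mathbb{Z}^2}$ with the product topology; $X_\eta$ is the closure of the orbit of $\eta$. A system is proximal if every pair $(x,y)$ of its points satisfies $\liminf_{\mathbf{n}\to\infty}D(S_{\mathbf{n}}x,S_{\mathbf{n}}y)=0$ for a compatible metric $D$. *)

From Stdlib Require Import ZArith Znumtheory List ClassicalEpsilon.
Open Scope Z_scope.

Definition Z2 := (Z * Z)%type.
Definition addZ2 (g h : Z2) : Z2 := (fst g + fst h, snd g + snd h).
Definition oppZ2 (g : Z2) : Z2 := (- fst g, - snd g).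
Definition subZ2 (g h : Z2) : Z2 := addZ2 g (oppZ2 h).

Definition subset2 := Z2 -> Prop.

(* A lattice: a subgroup of Z^2 of finite index (finitely many cosets). *)
Definition is_lattice (L : subset2) : Prop :=
  L (0, 0) /\
  (forall g h, L g -> L h -> L (addZ2 g h)) /\
  (forall g, L g -> L (oppZ2 g)) /\
  exists reps : list Z2, forall g, exists r, In r reps /\ L (subZ2 g r).

Definition proper_lattice (L : subset2) : Prop :=
  is_lattice L /\ exists g, ~ L g.

Definition coprime_lat (L L' : subset2) : Prop :=
  forall g, exists a b, L a /\ L' b /\ g = addZ2 a b.

Definition span2 (v w : Z2) : subset2 :=
  fun g => exists k m : Z, g = (k * fst v + m * fst w, k * snd v + m * snd w).

(* The lattices Lambda_i (i >= 1), given an enumeration p of the odd primes: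
   Lambda_1 = (1,1)Z + (0,2)Z, Lambda_2 = Z x 2Z,
   Lambda_{2k+1} = (2 p_k, 1)Z + (0,2)Z, Lambda_{2k+2} = (2^(k+1), 1)Z + (0,2)Z, k >= 1. *)
Definition Lam (p : nat -> Z) (i : nat) : subset2 :=
  match i with
  | 0%nat => fun _ => False (* unused index *)
  | 1%nat => span2 (1, 1) (0, 2)
  | 2%nat => fun g => exists m, snd g = 2 * m
  | _ => if Nat.odd i
         then span2 (2 * p (Nat.div2 (i - 1)), 1) (0, 2)
         else span2 (2 ^ Z.of_nat (Nat.div2 (i - 2) + 1), 1) (0, 2)
  end.

Definition MB (p : nat -> Z) : subset2 :=
  fun g => exists i : nat, (1 <= i)%nat /\ Lam p i g.

Definition FB (p : nat -> Z) : subset2 := fun g => ~ MB p g.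

Definition config := Z2 -> bool.

Definition eta (p : nat -> Z) : config :=
  fun g => if excluded_middle_informative (FB p g) then true else false.

Definition shift (n : Z2) (x : config) : config := fun g => x (addZ2 g n).

Definition agree_on (r : Z) (x y : config) : Prop :=
  forall a b, Z.abs a <= r -> Z.abs b <= r -> x (a, b) = y (a, b).

(* Orbit closure in the product topology (cylinder sets on boxes form a base). *)
Definition orbit_closure (z : config) : config -> Prop :=
  fun x => forall r : Z, exists n : Z2, agree_on r (shift n z) x.

(* Proximality: liminf_{n -> oo} D(S_n x, S_n y) = 0 for the compatible metric
   D(x,y) = 2^{-sup{r : x,y agree on [-r,r]^2}}; unfolded: for every box radius r
   and every bound N there is n with |n| >= N such that S_n x, S_n y agree on
   [-r,r]^2. *)
Definition proximal (X : config -> Prop) : Prop :=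
  forall x y, X x -> X y ->
  forall r N : Z, exists n : Z2,
    Z.abs (fst n) + Z.abs (snd n) >= N /\ agree_on r (shift n x) (shift n y).

(* Each Lambda_i is Z x 2Z or {(t c, b) : t = b mod 2} with c = 1 or |c| >= 4
   (c = 2 p_k or 2^(k+1)).  So a point (a, b) with b odd lies in M_B only if a is
   odd or |a| >= 4; conversely, writing a = 2^j t with t odd puts every other such
   point in some Lambda_i, using an odd prime factor of t when j = 1.  Hence eta,
   and with it every point of its orbit closure, is supported in a vertical strip
   of bounded width, and two such configurations both vanish on a given box after
   a large horizontal shift.  Finally a subgroup of Z^2 meeting {0} x odd nowhere
   lies in one of the three index-2 subgroups {b even}, {a + b even}, {a even};
   two subgroups inside the same one are not coprime, so among any four of the
   lattices two fail to be coprime. *)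
From Pilot Require Import Defs.
From Stdlib Require Import ZArith Znumtheory ClassicalEpsilon Classical Lia.
Open Scope Z_scope.

Lemma two_adic_decomp c : c <> 0 -> exists (j : nat) t, Z.Odd t /\ c = 2 ^ Z.of_nat j * t.
Proof.
  intros Hc.
  enough (H : forall n, 0 <= n -> forall c, Z.abs c = n -> c <> 0 ->
            exists (j : nat) t, Z.Odd t /\ c = 2 ^ Z.of_nat j * t)
    by exact (H _ (Z.abs_nonneg c) c eq_refl Hc).
  intros n Hn; pattern n; apply Z_lt_induction; [|exact Hn].
  intros m IH c' Hm Hc'.
  destruct (Z.Even_or_Odd c') as [[h Hh]|Hodd].
  - destruct (IH (Z.abs h) ltac:(lia) h eq_refl ltac:(lia)) as [j [t [Ht Eh]]].
    exists (S j), t; split; [exact Ht|].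
    rewrite Nat2Z.inj_succ, Z.pow_succ_r by lia; lia.
  - exists O, c'; split; [exact Hodd | change (2 ^ Z.of_nat 0) with 1; lia].
Qed.

Lemma prime_divisor_exists n : 2 <= n -> exists q, prime q /\ (q | n).
Proof.
  intros Hn; assert (Hn0 : 0 <= n) by lia; revert Hn.
  pattern n; apply Z_lt_induction; [|exact Hn0].
  intros m IH Hm.
  destruct (prime_dec m) as [Hpm|Hnpm].
  - exists m; split; [exact Hpm | apply Z.divide_refl].
  - destruct (not_prime_divide m ltac:(lia) Hnpm) as [d [Hd Hdm]].
    destruct (IH d ltac:(lia) ltac:(lia)) as [q [Hq Hqd]].
    exists q; split; [exact Hq | exact (Z.divide_trans _ _ _ Hqd Hdm)].
Qed.

Lemma odd_prime_factor t : Z.Odd t -> 3 <= Z.abs t ->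
  exists q s, prime q /\ q <> 2 /\ Z.Odd s /\ t = s * q.
Proof.
  intros Ht Habs.
  destruct (prime_divisor_exists (Z.abs t) ltac:(lia)) as [q [Hq Hqt]].
  destruct (proj1 (Z.divide_abs_r q t) Hqt) as [s Hs].
  assert (Hodd : Z.Odd q /\ Z.Odd s).
  { rewrite Hs in Ht; rewrite <- !Z.odd_spec in *; rewrite Z.odd_mul in Ht.
    now apply andb_prop in Ht. }
  exists q, s; split; [exact Hq|]; split; [|tauto].
  intros ->; destruct Hodd as [[k Hk] _]; lia.
Qed.

Lemma span2_col_iff c a b :
  span2 (c, 1) (0, 2) (a, b) <-> exists t, a = t * c /\ Z.Even (b - t).
Proof.
  split.
  - intros [k [m E]]; injection E as Ea Eb.
    exists k; split; [lia | exists m; lia].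
  - intros [t [Ha [m Hm]]]; exists t, m; cbn; f_equal; lia.
Qed.

Lemma Lam_odd_index p k : (1 <= k)%nat ->
  Lam p (2 * k + 1) = span2 (2 * p k, 1) (0, 2).
Proof.
  intros Hk; destruct k as [|k]; [lia|].
  replace (2 * S k + 1)%nat with (S (S (S (2 * k)))) by lia; cbn [Lam].
  replace (Nat.odd (S (S (S (2 * k))))) with true
    by (symmetry; apply Nat.odd_spec; exists (S k); lia).
  replace (S (S (S (2 * k))) - 1)%nat with (2 * S k)%nat by lia.
  now rewrite Nat.div2_double.
Qed.

Lemma Lam_even_index p k : (1 <= k)%nat ->
  Lam p (2 * k + 2) = span2 (2 ^ (Z.of_nat k + 1), 1) (0, 2).
Proof.
  intros Hk; destruct k as [|k]; [lia|].
  replace (2 * S k + 2)%nat with (S (S (S (S (2 * k))))) by lia; cbn [Lam].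
  replace (Nat.odd (S (S (S (S (2 * k)))))) with false
    by (symmetry; apply Bool.not_true_iff_false;
        rewrite Nat.odd_spec; intros [m Hm]; lia).
  replace (S (S (S (S (2 * k)))) - 2)%nat with (2 * S k)%nat by lia.
  now rewrite Nat.div2_double, Nat2Z.inj_add.
Qed.

Section FreeSet.
Variable p : nat -> Z.
Hypothesis hp_odd_prime : forall i, (1 <= i)%nat -> prime (p i) /\ p i <> 2.
Hypothesis hp_surj : forall q, prime q -> q <> 2 -> exists i, (1 <= i)%nat /\ p i = q.

Lemma Lam_shape i a b : (1 <= i)%nat -> Lam p i (a, b) ->
  Z.Even b \/ exists c, (c = 1 \/ 4 <= Z.abs c) /\ span2 (c, 1) (0, 2) (a, b).
Proof.
  intros Hi HL.
  destruct (Nat.Even_or_Odd i) as [[k ->]|[k ->]].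
  - destruct k as [|[|k]]; [lia | now left |].
    right; exists (2 ^ (Z.of_nat (S k) + 1)); split.
    + right; rewrite Z.abs_eq by (apply Z.pow_nonneg; lia).
      change 4 with (2 ^ 2); apply Z.pow_le_mono_r; lia.
    + rewrite <- (Lam_even_index p) by lia.
      now replace (2 * S k + 2)%nat with (2 * S (S k))%nat by lia.
  - right; destruct k as [|k]; [now exists 1; split; [left|] |].
    exists (2 * p (S k)); split.
    + right; destruct (hp_odd_prime (S k) ltac:(lia)) as [Hpr Hp2].
      pose proof (prime_ge_2 _ Hpr); lia.
    + now rewrite <- (Lam_odd_index p) by lia.
Qed.

Lemma Lam_odd_snd i a b : (1 <= i)%nat -> Lam p i (a, b) -> Z.Odd b ->
  Z.Odd a \/ 4 <= Z.abs a.
Proof.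
  intros Hi HL Hb.
  destruct (Lam_shape i a b Hi HL) as [Heven | [c [Hc Hspan]]].
  - exfalso; now apply (Z.Even_Odd_False b).
  - apply span2_col_iff in Hspan as [t [-> [m Hm]]].
    assert (Ht : Z.Odd t) by (destruct Hb as [n Hn]; exists (n - m); lia).
    destruct Hc as [->|Hc]; [left; now rewrite Z.mul_1_r|].
    right; rewrite Z.abs_mul.
    assert (t <> 0) by (destruct Ht as [n Hn]; lia); nia.
Qed.

Lemma MB_of_even_snd a b : Z.Even b -> MB p (a, b).
Proof. intros [m Hm]; exists 2%nat; split; [lia | now exists m]. Qed.

Lemma MB_of_span_col i c t b : (1 <= i)%nat -> Lam p i = span2 (c, 1) (0, 2) ->
  Z.Odd t -> Z.Odd b -> MB p (t * c, b).
Proof.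
  intros Hi HL [u Hu] [v Hv]; exists i; split; [exact Hi|].
  rewrite HL; apply span2_col_iff; exists t; split; [reflexivity | exists (v - u); lia].
Qed.

Lemma MB_of_not_free a b : ~ ((a = -2 \/ a = 0 \/ a = 2) /\ Z.Odd b) -> MB p (a, b).
Proof.
  intros Hnot.
  destruct (Z.Even_or_Odd b) as [Hb|Hb]; [now apply MB_of_even_snd|].
  assert (Ha : ~ (a = -2 \/ a = 0 \/ a = 2)) by tauto; clear Hnot.
  destruct (Z.Even_or_Odd a) as [[c ->]|Hodd].
  2:{ rewrite <- (Z.mul_1_r a); now apply (MB_of_span_col 1). }
  destruct (two_adic_decomp c ltac:(lia)) as [[|j] [t [Ht ->]]].
  - change (2 ^ Z.of_nat 0) with 1 in Ha |- *; rewrite Z.mul_1_l in Ha |- *.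
    destruct (odd_prime_factor t Ht) as [q [s [Hq [Hq2 [Hs ->]]]]].
    { destruct Ht as [n Hn]; lia. }
    destruct (hp_surj q Hq Hq2) as [k [Hk <-]].
    replace (2 * (s * p k)) with (s * (2 * p k)) by ring.
    exact (MB_of_span_col (2 * k + 1) _ _ _ ltac:(lia) (Lam_odd_index p k Hk) Hs Hb).
  - replace (2 * (2 ^ Z.of_nat (S j) * t)) with (t * 2 ^ (Z.of_nat (S j) + 1))
      by (rewrite Z.pow_add_r by lia; ring).
    exact (MB_of_span_col (2 * S j + 2) _ _ _ ltac:(lia)
             (Lam_even_index p (S j) ltac:(lia)) Ht Hb).
Qed.

Lemma FB_iff a b : FB p (a, b) <-> (a = -2 \/ a = 0 \/ a = 2) /\ Z.Odd b.
Proof.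
  split.
  - intros HF; apply NNPP; intros Hnot; exact (HF (MB_of_not_free a b Hnot)).
  - intros [Ha Hb] [i [Hi HL]].
    destruct (Lam_odd_snd i a b Hi HL Hb) as [[n Hn]|Habs]; lia.
Qed.

Lemma eta_support a b : eta p (a, b) = true -> Z.abs a <= 2.
Proof.
  unfold eta; destruct (excluded_middle_informative (FB p (a, b))) as [HF|]; [|discriminate].
  intros _; apply FB_iff in HF; lia.
Qed.

End FreeSet.

Definition strip_supported (w : Z) (x : config) : Prop :=
  exists A, forall a b, x (a, b) = true -> Z.abs (a - A) <= w.

Lemma orbit_closure_strip_supported z w x :
  (forall a b, z (a, b) = true -> Z.abs a <= w) ->
  orbit_closure z x -> strip_supported (2 * w) x.
Proof.
  intros Hz Hx.
  destruct (classic (exists a b, x (a, b) = true)) as [[a0 [b0 Hx0]]|Hnone].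
  - exists a0; intros a b Hxab.
    destruct (Hx (Z.abs a + Z.abs b + Z.abs a0 + Z.abs b0)) as [[n1 n2] Hagree].
    rewrite <- (Hagree a b) in Hxab by lia.
    rewrite <- (Hagree a0 b0) in Hx0 by lia.
    unfold Defs.shift, addZ2 in Hxab, Hx0.
    apply Hz in Hxab, Hx0; cbn [fst] in Hxab, Hx0; lia.
  - exists 0; intros a b Hxab; exfalso; eauto.
Qed.

Lemma proximal_of_strip_supported w X :
  (forall x, X x -> strip_supported w x) -> proximal X.
Proof.
  intros HX x y Hx Hy r N.
  destruct (HX x Hx) as [Ax HAx], (HX y Hy) as [Ay HAy].
  set (M := Z.abs N + Z.abs r + Z.abs Ax + Z.abs Ay + Z.abs w + 1).
  exists (M, 0); split; [cbn; lia|].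
  intros a b Ha Hb; unfold Defs.shift, addZ2; cbn.
  destruct (x (a + M, b + 0)) eqn:Ex; [apply HAx in Ex; lia|].
  destruct (y (a + M, b + 0)) eqn:Ey; [apply HAy in Ey; lia|].
  reflexivity.
Qed.

Definition subgroup2 (L : subset2) : Prop :=
  L (0, 0) /\ (forall g h, L g -> L h -> L (addZ2 g h)) /\ (forall g, L g -> L (oppZ2 g)).

Lemma subgroup2_of_lattice L : is_lattice L -> subgroup2 L.
Proof. intros [H0 [Hadd [Hopp _]]]; now repeat split. Qed.

Lemma subgroup2_sub L g h : subgroup2 L -> L g -> L h -> L (subZ2 g h).
Proof. intros [_ [Hadd Hopp]] Hg Hh; exact (Hadd _ _ Hg (Hopp _ Hh)). Qed.

Lemma subgroup2_scale L a b k : subgroup2 L -> L (a, b) -> L (k * a, k * b).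
Proof.
  intros HL Hab.
  assert (Hnat : forall n : nat, L (Z.of_nat n * a, Z.of_nat n * b)).
  { induction n as [|n IH]; [exact (proj1 HL)|].
    replace (Z.of_nat (S n) * a, Z.of_nat (S n) * b)
      with (addZ2 (Z.of_nat n * a, Z.of_nat n * b) (a, b))
      by (unfold addZ2; cbn [fst snd]; rewrite Nat2Z.inj_succ; f_equal; ring).
    now apply HL. }
  destruct (Z.le_ge_cases 0 k).
  - replace k with (Z.of_nat (Z.to_nat k)) by lia; apply Hnat.
  - replace (k * a, k * b)
      with (subZ2 (0, 0) (Z.of_nat (Z.to_nat (- k)) * a, Z.of_nat (Z.to_nat (- k)) * b))
      by (unfold subZ2, addZ2, oppZ2; cbn [fst snd]; rewrite Z2Nat.id by lia; f_equal; ring).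
    apply subgroup2_sub; [exact HL | exact (proj1 HL) | apply Hnat].
Qed.

(* The combination a' (a, b) - a (a', b') = (0, a' b - a b') lies on the vertical axis. *)
Lemma even_fst_of_even_snd L a b a' b' : subgroup2 L ->
  (forall y, L (0, y) -> Z.Even y) ->
  L (a, b) -> Z.Odd b -> L (a', b') -> Z.Even b' -> Z.Even a'.
Proof.
  intros HL Haxis Hab Hb Ha'b' Hb'.
  destruct (Z.Even_or_Odd a') as [|Ha']; [assumption|exfalso].
  assert (Hv := subgroup2_sub L _ _ HL (subgroup2_scale L a b a' HL Hab)
                  (subgroup2_scale L a' b' a HL Ha'b')).
  unfold subZ2, addZ2, oppZ2 in Hv; cbn in Hv.
  replace (a' * a + - (a * a')) with 0 in Hv by ring.
  destruct (Haxis _ Hv) as [w Hw], Hb as [s Hs], Hb' as [u Hu], Ha' as [v Hv'].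
  subst; nia.
Qed.

(* The three nonzero characters Z^2 -> Z/2Z, each read as an integer to be taken mod 2. *)
Definition parity_form (c : nat) (g : Z2) : Z :=
  match c with 0%nat => snd g | 1%nat => fst g + snd g | _ => fst g end.

Definition in_parity_class (L : subset2) (c : nat) : Prop :=
  forall g, L g -> Z.Even (parity_form c g).

Lemma parity_form_add c g h :
  parity_form c (addZ2 g h) = parity_form c g + parity_form c h.
Proof. destruct c as [|[|c]]; cbn; ring. Qed.

Lemma parity_form_one c : exists g, parity_form c g = 1.
Proof. destruct c as [|[|c]]; [exists (0, 1) | exists (0, 1) | exists (1, 0)]; reflexivity. Qed.

Lemma subgroup2_parity_class L : subgroup2 L ->
  (forall y, L (0, y) -> Z.Even y) -> exists c, (c < 3)%nat /\ in_parity_class L c.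
Proof.
  intros HL Haxis.
  destruct (classic (exists a b, L (a, b) /\ Z.Odd a)) as [[a [b [Hab Ha]]]|Hnone].
  2:{ exists 2%nat; split; [lia|]; intros [a b] Hab; cbn.
      destruct (Z.Even_or_Odd a) as [|Ha]; [assumption | exfalso; eauto]. }
  destruct (Z.Even_or_Odd b) as [Hb|Hb].
  - exists 0%nat; split; [lia|]; intros [a' b'] Ha'b'; cbn.
    destruct (Z.Even_or_Odd b') as [|Hb']; [assumption | exfalso].
    apply (Z.Even_Odd_False a); [|exact Ha].
    exact (even_fst_of_even_snd L a' b' a b HL Haxis Ha'b' Hb' Hab Hb).
  - exists 1%nat; split; [lia|]; intros [a' b'] Ha'b'; cbn.
    destruct (Z.Even_or_Odd b') as [Hb'|Hb'].
    + destruct (even_fst_of_even_snd L a b a' b' HL Haxis Hab Hb Ha'b' Hb') as [u Hu].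
      destruct Hb' as [v Hv]; exists (u + v); lia.
    + assert (Hdiff := subgroup2_sub L _ _ HL Ha'b' Hab).
      unfold subZ2, addZ2, oppZ2 in Hdiff; cbn in Hdiff.
      destruct (even_fst_of_even_snd L a b _ _ HL Haxis Hab Hb Hdiff) as [u Hu].
      { destruct Hb as [s Hs], Hb' as [t Ht]; exists (t - s); lia. }
      destruct Ha as [s Hs], Hb' as [t Ht]; exists (u + s + t + 1); lia.
Qed.

Lemma not_coprime_in_parity_class c L L' :
  in_parity_class L c -> in_parity_class L' c -> ~ coprime_lat L L'.
Proof.
  intros HL HL' Hcop.
  destruct (parity_form_one c) as [g Hg].
  destruct (Hcop g) as [h [h' [Hh [Hh' ->]]]].
  rewrite parity_form_add in Hg.
  destruct (HL h Hh) as [u Hu], (HL' h' Hh') as [v Hv]; lia.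
Qed.

Lemma pigeonhole_four_three (P : nat -> nat -> Prop) :
  (forall j, (1 <= j <= 4)%nat -> exists c, (c < 3)%nat /\ P j c) ->
  exists i j c, (1 <= i)%nat /\ (1 <= j)%nat /\ i <> j /\ P i c /\ P j c.
Proof.
  intros H.
  destruct (H 1%nat) as [c1 [? P1]], (H 2%nat) as [c2 [? P2]],
           (H 3%nat) as [c3 [? P3]], (H 4%nat) as [c4 [? P4]]; try lia.
  assert (E : c1 = c2 \/ c1 = c3 \/ c1 = c4 \/ c2 = c3 \/ c2 = c4 \/ c3 = c4) by lia.
  destruct E as [<-|[<-|[<-|[<-|[<-|<-]]]]];
    [exists 1%nat, 2%nat, c1 | exists 1%nat, 3%nat, c1 | exists 1%nat, 4%nat, c1
    | exists 2%nat, 3%nat, c2 | exists 2%nat, 4%nat, c2 | exists 3%nat, 4%nat, c3];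
    repeat split; (lia || assumption).
Qed.

Lemma exists_non_coprime_pair (M : subset2) (L : nat -> subset2) :
  (forall y, Z.Odd y -> ~ M (0, y)) ->
  (forall j, (1 <= j)%nat -> subgroup2 (L j)) ->
  (forall j g, (1 <= j)%nat -> L j g -> M g) ->
  exists i j, (1 <= i)%nat /\ (1 <= j)%nat /\ i <> j /\ ~ coprime_lat (L i) (L j).
Proof.
  intros HM Hgrp Hsub.
  destruct (pigeonhole_four_three (fun j c => in_parity_class (L j) c))
    as [i [j [c [Hi [Hj [Hij [Pi Pj]]]]]]].
  - intros j Hj; apply subgroup2_parity_class; [apply Hgrp; lia|].
    intros y Hy; destruct (Z.Even_or_Odd y) as [|Hodd]; [assumption | exfalso].
    exact (HM y Hodd (Hsub j _ ltac:(lia) Hy)).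
  - exists i, j; repeat split; try assumption.
    exact (not_coprime_in_parity_class c _ _ Pi Pj).
Qed.

Theorem mainTheorem12 (p : nat -> Z)
  (hp_odd_prime : forall i, (1 <= i)%nat -> prime (p i) /\ p i <> 2)
  (hp_inj : forall i j, (1 <= i)%nat -> (1 <= j)%nat -> p i = p j -> i = j)
  (hp_surj : forall q, prime q -> q <> 2 -> exists i, (1 <= i)%nat /\ p i = q) :
  (forall a b : Z, FB p (a, b) <->
     ((a = -2 \/ a = 0 \/ a = 2) /\ Z.Odd b)) /\
  proximal (orbit_closure (eta p)) /\
  ~ (exists L : nat -> subset2,
       (forall j, (1 <= j)%nat -> proper_lattice (L j)) /\
       (forall i j, (1 <= i)%nat -> (1 <= j)%nat -> i <> j -> coprime_lat (L i) (L j)) /\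
       (forall j g, (1 <= j)%nat -> L j g -> MB p g)).
Proof.
  split; [exact (FB_iff p hp_odd_prime hp_surj)|].
  split.
  - apply (proximal_of_strip_supported (2 * 2)); intros x.
    apply orbit_closure_strip_supported; intros a b.
    exact (eta_support p hp_odd_prime hp_surj a b).
  - intros [L [Hproper [Hcop Hsub]]].
    destruct (exists_non_coprime_pair (MB p) L) as [i [j [Hi [Hj [Hij Hnot]]]]];
      [| intros j Hj; exact (subgroup2_of_lattice _ (proj1 (Hproper j Hj))) | exact Hsub |].
    + intros y Hy HM; apply (FB_iff p hp_odd_prime hp_surj 0 y); [tauto | exact HM].
    + exact (Hnot (Hcop i j Hi Hj Hij)).
Qed.
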